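(* Let $N\ge1$, $K>0$, $r_1,\dots,r_N>0$, and let $(\mu_{ij})$ be a nonnegative, symmetric, irreducible $N\times N$ matrix. Let $v(t)$ be the solution of $$\frac{dv_i}{dt}=v_i\left[r_i-\frac{1}{K}\sum_{j=1}^Nr_jv_j\right]+\sum_{j=1}^N\mu_{ij}(v_j-v_i),\qquad i=1,\dots,N,$$ with initial datum $v(0)\in[0,\infty)^N$ not identically zero, and let $\mathcal{N}(t)=\sum_{i=1}^Nv_i(t)$. Then $\mathcal{N}(t)$ converges exponentially fast to $K$ as $t\to\infty$. Moreover, for all $t\ge0$, $$\min\{\mathcal{N}_{min}(t),\mathcal{N}_{max}(t)\}\le\mathcal{N}(t)\le\max\{\mathcal{N}_{min}(t),\mathcal{N}_{max}(t)\},$$ where $\mathcal{N}_{min}$ and $\mathcal{N}_{max}$ are the solutions of the logistic equations $\frac{du}{dt}=\xi^{\pm}u\left(1-\frac uK\right)$, $u(0)=\mathcal{N}(0)$, with $\xi^-=\min\{r_1,\dots,r_N\}$ (for $\mathcal{N}_{min}$) and $\xi^+=\max\{r_1,\dots,r_N\}$ (for $\mathcal{N}_{max}$). *)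

From HB Require Import structures.
From mathcomp Require Import all_boot all_order all_algebra.
From mathcomp Require Import all_classical all_reals all_analysis.
Set Implicit Arguments. Unset Strict Implicit. Unset Printing Implicit Defensive.
Import Order.TTheory GRing.Theory Num.Theory.
Import numFieldNormedType.Exports.
Local Open Scope ring_scope.
Local Open Scope classical_set_scope.

Definition irreducible_mx (R : nzRingType) (N : nat) (mu : 'I_N -> 'I_N -> R) :=
  forall S : {set 'I_N}, S != finset.set0 -> S != [set: 'I_N]%SET ->
    exists i j, [/\ i \in S, j \notin S & mu i j != 0].

Definition seqmin (R : realDomainType) (s : seq R) : R := foldr Num.min (head 0 s) s.
Definition seqmax (R : realDomainType) (s : seq R) : R := foldr Num.max (head 0 s) s.

Definition xi_minus (R : realDomainType) (N : nat) (r : 'I_N -> R) : R :=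
  seqmin [seq r i | i <- enum 'I_N].
Definition xi_plus (R : realDomainType) (N : nat) (r : 'I_N -> R) : R :=
  seqmax [seq r i | i <- enum 'I_N].

Definition total_pop (R : realDomainType) (N : nat) (v : 'I_N -> R -> R) (t : R) : R :=
  \sum_(i < N) v i t.

(* Summing the equations, the migration terms cancel by symmetry of mu, so the
   total population N = sum_i v_i satisfies N' = S (1 - N / K) with
   S = sum_j r_j v_j.  As long as every v_i is nonnegative,
   xi^- N <= S <= xi^+ N, i.e. N follows a logistic law whose rate is pinched
   between xi^- and xi^+.  Hence N stays on the side of K where it starts, is
   monotone there, converges exponentially to K, and by the comparison principle
   lies between the two logistic solutions.  Nonnegativity of the v_i and the
   comparison principle both come from one invariance argument: the sum E of the
   squared negative parts of a solution satisfies E' <= 2 M E on every bounded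
   time interval, so E(0) = 0 forces E = 0 by Gronwall's inequality. *)

From HB Require Import structures.
From mathcomp Require Import all_boot all_order all_algebra.
From mathcomp Require Import all_classical all_reals all_analysis.
From mathcomp Require Import ring lra.
Import Order.TTheory GRing.Theory Num.Theory.
Import numFieldNormedType.Exports.
Local Open Scope ring_scope.
Local Open Scope classical_set_scope.

Section DifferentialInequalities.
Context {R : realType}.

Lemma within_continuous_sum (A : set R) n (h : 'I_n -> R -> R) :
  (forall i, {within A, continuous (h i)}) ->
  {within A, continuous (fun s => \sum_(i < n) h i s)}.
Proof.
move=> ch; have -> : (fun s => \sum_(i < n) h i s) = \sum_(i < n) h i.
  by apply/funext => s; rewrite fct_sumE.
apply: (big_ind (fun g : R -> R => {within A, continuous g})) => //.
- by move=> x; exact: cvg_cst.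
- by move=> f g cf cg; exact: within_continuousD.
Qed.

Lemma bounded_above_on_itv {f : R -> R} {T : R} :
  {within [set s : R | 0 <= s], continuous f} -> 0 < T ->
  exists M, forall t, 0 < t -> t < T -> f t <= M.
Proof.
move=> cf T0.
have cfT : {within `[0, T], continuous f}.
  by apply: continuous_subspaceW cf => s /=; rewrite in_itv /= => /andP[].
have [c _ fc] := EVT_max (ltW T0) cfT.
by exists (f c) => t t0 tT; apply: fc; rewrite in_itv /= (ltW t0) (ltW tT).
Qed.

Lemma is_derive_expRM (c s : R) :
  is_derive s 1 (fun u => expR (c * u)) (expR (c * s) * c).
Proof.
have dcu : is_derive s 1 (fun u : R => c * u) c.
  have := @is_deriveZ R R^o R^o id c s 1 1 (is_derive_id _ _).
  by move=> H; apply: (is_derive_eq H); rewrite /GRing.scale /= mulr1.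
exact: (@is_derive1_comp R expR (fun u => c * u) s _ _ (is_derive_expR _) dcu).
Qed.

Lemma continuous_expRM (c : R) : continuous (fun u => expR (c * u)).
Proof.
move=> x; apply: differentiable_continuous; apply/derivable1_diffP.
by have [] := is_derive_expRM c x.
Qed.

Lemma ler0_derive_le_init (f df : R -> R) (t : R) : 0 <= t ->
  {within [set s : R | 0 <= s], continuous f} ->
  (forall s, 0 < s -> s < t -> is_derive s 1 f (df s)) ->
  (forall s, 0 < s -> s < t -> df s <= 0) -> f t <= f 0.
Proof.
move=> t0 cf fd dfn.
apply: (@ler0_derive1_le_cc R f 0 t).
- by move=> x; rewrite in_itv /= => /andP[x0 xt]; have [] := fd x x0 xt.
- move=> x; rewrite in_itv /= => /andP[x0 xt].
  by have := fd x x0 xt => H; rewrite derive1E derive_val dfn.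
- by apply: continuous_subspaceW cf => s /=; rewrite in_itv /= => /andP[].
- by rewrite in_itv /= lexx t0.
- by rewrite in_itv /= lexx t0.
- exact: t0.
Qed.

Lemma gronwall (f df : R -> R) (lam t : R) : 0 <= t ->
  {within [set s : R | 0 <= s], continuous f} ->
  (forall s, 0 < s -> s < t -> is_derive s 1 f (df s)) ->
  (forall s, 0 < s -> s < t -> df s <= lam * f s) ->
  f t <= f 0 * expR (lam * t).
Proof.
move=> t0 cf fd hd.
have decay : f t * expR (- lam * t) <= f 0.
  have := @ler0_derive_le_init (fun s => f s * expR (- lam * s))
    (fun s => f s *: (expR (- lam * s) * - lam) + expR (- lam * s) *: df s) t t0.
  rewrite mulr0 expR0 mulr1; apply.
  - move=> z; apply: cvgM; first exact: cf.
    exact: (continuous_subspaceT (@continuous_expRM (- lam))).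
  - move=> s s0 st; apply: is_deriveM; [exact: fd | exact: is_derive_expRM].
  - move=> s s0 st; rewrite /GRing.scale /=.
    have e0 := expR_gt0 (- lam * s); have := hd s s0 st; nra.
by rewrite -ler_pdivlMr ?expR_gt0 // -expRN mulNr opprK in decay.
Qed.

End DifferentialInequalities.

Section NegativePart.
Context {R : realType}.

Definition negsq (y : R) : R := Num.min y 0 ^+ 2.

Lemma negsq_ge0 (y : R) : 0 <= negsq y.
Proof. exact: sqr_ge0. Qed.

Lemma negsqE (y : R) : negsq y = Num.min y 0 * y.
Proof. by rewrite /negsq expr2; have [|] := leP y 0; rewrite ?mul0r ?mulr0. Qed.

Lemma negsq_eq0 (y : R) : (negsq y == 0) = (0 <= y).
Proof.
by rewrite /negsq sqrf_eq0; have [|/lt_eqF] := leP 0 y; rewrite ?eqxx.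
Qed.

Lemma min0_mul_subr_le (x y : R) : Num.min x 0 * (y - x) <= negsq y.
Proof.
have ax := negsqE x; rewrite /negsq in ax *.
have a0 : Num.min x 0 <= 0 by rewrite ge_min lexx orbT.
have by_ : Num.min y 0 <= y by rewrite ge_min lexx.
move: ax a0 by_; set a := Num.min x 0; set b := Num.min y 0 => ax a0 by_.
have : a * y <= a * b by rewrite ler_wnM2l.
have : 0 <= (a - b / 2) ^+ 2 by exact: sqr_ge0.
nra.
Qed.

Lemma is_derive_negsq (x : R) : is_derive x 1 negsq (2 * Num.min x 0).
Proof.
have [x0|x0|->] := ltgtP x 0.
- apply: (near_eq_is_derive (f := fun y : R => y ^+ 2)).
    by near=> y; rewrite /negsq min_l // ltW //; near: y; exact: lt_nbhsl.
  have := @is_deriveX _ _ id 2 x 1 1 (is_derive_id _ _).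
  rewrite (_ : id ^+ 2 = (fun y : R => y ^+ 2)); last first.
    by apply/funext => y; rewrite exprfctE.
  by move=> H; apply: (is_derive_eq H); rewrite expr1; exact: mulr1.
- apply: (near_eq_is_derive (f := fun _ : R => (0 : R))).
    near=> y; rewrite /negsq min_r ?expr0n // ltW //.
    by near: y; apply: lt_nbhsr.
  by rewrite mulr0; exact: is_derive_cst.
rewrite mulr0.
have dq : (fun h : R => h^-1 *: ((negsq \o shift 0) h%:A - negsq 0)) @ 0^' --> 0.
  apply/cvgrPdist_lt => e e0; near=> h.
  rewrite /= addr0 [h%:A]mulr1 /negsq minxx expr0n subr0 sub0r normrN normrZ normfV.
  have [h0|h0] := leP h 0; last by rewrite expr0n normr0 mulr0.
  rewrite normrX expr2 mulKf ?normr_eq0; last by near: h; exact: nbhs_dnbhs_neq.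
  by near: h; exact: dnbhs0_lt.
by apply: DeriveDef; [apply/cvg_ex; exists 0 | exact: cvg_lim].
Unshelve. all: by end_near.
Qed.

Lemma continuous_negsq : continuous negsq.
Proof.
move=> x; apply: differentiable_continuous; apply/derivable1_diffP.
by have [] := is_derive_negsq x.
Qed.

Lemma nonneg_invariant n (f df : 'I_n -> R -> R) :
  (forall i, {within [set t : R | 0 <= t], continuous (f i)}) ->
  (forall i (t : R), 0 < t -> is_derive t 1 (f i) (df i t)) ->
  (forall i, 0 <= f i 0) ->
  (forall T : R, 0 < T -> exists M : R, forall t : R, 0 < t -> t < T ->
     \sum_(i < n) Num.min (f i t) 0 * df i t <= M * \sum_(i < n) negsq (f i t)) ->
  forall i (t : R), 0 <= t -> 0 <= f i t.
Proof.
move=> cf fd f0 hM i t t0.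
have [M leM] := hM (t + 1) (ltr_wpDl t0 ltr01).
pose E s := \sum_(j < n) negsq (f j s).
have Et : E t <= 0.
  have := @gronwall R E (fun s => \sum_(j < n) 2 * Num.min (f j s) 0 * df j s)
    (2 * M) t t0.
  have -> : E 0 = 0 by rewrite /E big1 // => j _; apply/eqP; rewrite negsq_eq0.
  rewrite mul0r; apply.
  - apply: within_continuous_sum => j; apply: within_continuous_comp => //.
    by move=> y _; exact: continuous_negsq.
  - move=> s s0 _; rewrite (_ : E = \sum_(j < n) (negsq \o f j)); last first.
      by apply/funext => s'; rewrite fct_sumE.
    apply: is_derive_sum => j.
    exact: (@is_derive1_comp R negsq (f j) s _ _ (is_derive_negsq _) (fd j s s0)).
  - move=> s s0 st; under eq_bigr do rewrite -mulrA.
    by rewrite -mulr_sumr -mulrA ler_pM2l // leM // (lt_le_trans st) // lerDl.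
have : negsq (f i t) == 0.
  rewrite eq_le negsq_ge0 andbT; apply: le_trans Et.
  by rewrite /E (bigD1 i) //= lerDl sumr_ge0 // => j _; exact: negsq_ge0.
by rewrite negsq_eq0.
Qed.

Lemma nonneg_invariant1 (f df : R -> R) :
  {within [set t : R | 0 <= t], continuous f} ->
  (forall t : R, 0 < t -> is_derive t 1 f (df t)) ->
  0 <= f 0 ->
  (forall T : R, 0 < T -> exists M : R, forall t : R, 0 < t -> t < T ->
     Num.min (f t) 0 * df t <= M * negsq (f t)) ->
  forall t : R, 0 <= t -> 0 <= f t.
Proof.
move=> cf fd f0 hM t t0.
apply: (@nonneg_invariant 1 (fun=> f) (fun=> df) (fun=> cf) (fun=> fd) (fun=> f0) _ ord0 t t0).
by move=> T T0; have [M leM] := hM T T0; exists M => s s0 sT; rewrite !big_ord1 leM.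
Qed.

Lemma logistic_comparison (K a : R) (x y hx hy : R -> R) :
  {within [set t : R | 0 <= t], continuous x} ->
  {within [set t : R | 0 <= t], continuous y} ->
  (forall t : R, 0 < t -> is_derive t 1 x (a * x t * (1 - x t / K) + hx t)) ->
  (forall t : R, 0 < t -> is_derive t 1 y (a * y t * (1 - y t / K) + hy t)) ->
  (forall t : R, 0 < t -> hx t <= hy t) -> x 0 <= y 0 ->
  forall t : R, 0 <= t -> x t <= y t.
Proof.
move=> cx cy dx dy hxy xy0 t t0; rewrite -subr_ge0.
(* y - x solves a linear equation with coefficient w and nonnegative forcing. *)
pose w t := a - a / K * x t - a / K * y t.
apply: (@nonneg_invariant1 (fun t => y t - x t)
   (fun t => w t * (y t - x t) + (hy t - hx t))) => //.
- by move=> z; apply: cvgB; [exact: cy | exact: cx].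
- move=> s s0; have := is_deriveB (dy s s0) (dx s s0).
  by move=> H; apply: (is_derive_eq H); rewrite /w; ring.
- by rewrite subr_ge0.
have cw : {within [set t : R | 0 <= t], continuous w}.
  move=> z; apply: cvgB; first apply: cvgB; first exact: cvg_cst.
  - by apply: cvgM; [exact: cvg_cst | exact: cx].
  - by apply: cvgM; [exact: cvg_cst | exact: cy].
move=> T T0; have [M leM] := bounded_above_on_itv cw T0.
exists M => s s0 sT; rewrite mulrDr mulrCA -negsqE -[X in _ <= X]addr0.
apply: lerD; first by rewrite ler_wpM2r ?negsq_ge0 ?leM.
by rewrite mulr_le0_ge0 ?ge_min ?lexx ?orbT // subr_ge0 hxy.
Qed.

End NegativePart.

Section ExtremeRates.
Context {R : realDomainType}.

Lemma seqmin_le (s : seq R) x : x \in s -> seqmin s <= x.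
Proof.
rewrite /seqmin; elim: s (head 0 s) => // y s IH x0.
by rewrite inE => /orP[/eqP ->|/IH xs] /=; rewrite ge_min ?lexx ?xs ?orbT.
Qed.

Lemma seqmax_ge (s : seq R) x : x \in s -> x <= seqmax s.
Proof.
rewrite /seqmax; elim: s (head 0 s) => // y s IH x0.
by rewrite inE => /orP[/eqP ->|/IH xs] /=; rewrite le_max ?lexx ?xs ?orbT.
Qed.

Lemma seqmin_gt0 (s : seq R) :
  s != [::] -> (forall x, x \in s -> 0 < x) -> 0 < seqmin s.
Proof.
case: s => // x0 s _ s_gt0; have x0_gt0 := s_gt0 x0 (mem_head _ _).
rewrite /seqmin; elim: {-2}(x0 :: s) s_gt0 => //= y s' IH s'_gt0.
by rewrite lt_min s'_gt0 ?mem_head // IH // => z zs; rewrite s'_gt0 // inE zs orbT.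
Qed.

Lemma xi_minus_le N (r : 'I_N -> R) i : xi_minus r <= r i.
Proof. by apply: seqmin_le; apply: map_f; rewrite mem_enum. Qed.

Lemma xi_plus_ge N (r : 'I_N -> R) i : r i <= xi_plus r.
Proof. by apply: seqmax_ge; apply: map_f; rewrite mem_enum. Qed.

Lemma xi_minus_gt0 N (r : 'I_N -> R) :
  (0 < N)%N -> (forall i, 0 < r i) -> 0 < xi_minus r.
Proof.
move=> N0 r_gt0; apply: seqmin_gt0 => [|_ /mapP[i _ ->]] //.
by rewrite -size_eq0 size_map size_enum_ord -lt0n.
Qed.

End ExtremeRates.

Section LogisticSandwich.
Context {R : realType}.
Variables (K a b : R) (n S : R -> R).
Hypotheses (K_gt0 : 0 < K) (a_gt0 : 0 < a).
Hypothesis n_cont : {within [set t : R | 0 <= t], continuous n}.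
Hypothesis n_derive :
  forall t : R, 0 < t -> is_derive t 1 n (S t * (1 - n t / K)).
Hypothesis n_ge0 : forall t : R, 0 <= t -> 0 <= n t.
Hypothesis S_ge : forall t : R, 0 <= t -> a * n t <= S t.
Hypothesis S_le : forall t : R, 0 <= t -> S t <= b * n t.

Let S_ge0 (t : R) : 0 <= t -> 0 <= S t.
Proof. by move=> t0; apply: (le_trans _ (S_ge t t0)); rewrite mulr_ge0 ?n_ge0 // ltW. Qed.

Let n_derive_K (t : R) : 0 < t -> is_derive t 1 n (S t / K * (K - n t)).
Proof.
move=> t0; apply: (is_derive_eq (n_derive t t0)).
by field; rewrite gt_eqF.
Qed.

Lemma logistic_le_K : n 0 <= K -> forall t : R, 0 <= t -> n t <= K.
Proof.
move=> nK t t0; rewrite -subr_ge0.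
apply: (@nonneg_invariant1 R (fun t => K - n t) (fun t => 0 - S t / K * (K - n t))) => //.
- by move=> z; apply: cvgB; [exact: cvg_cst | exact: n_cont].
- by move=> s s0; have := n_derive_K s s0; exact: is_deriveB.
- by rewrite subr_ge0.
move=> T _; exists 0 => s s0 _; rewrite mul0r sub0r mulrN mulrCA -negsqE oppr_le0.
by rewrite mulr_ge0 ?negsq_ge0 ?divr_ge0 ?S_ge0 ?ltW.
Qed.

Lemma logistic_ge_K : K <= n 0 -> forall t : R, 0 <= t -> K <= n t.
Proof.
move=> Kn t t0; rewrite -subr_ge0.
apply: (@nonneg_invariant1 R (fun t => n t - K) (fun t => S t / K * (K - n t) - 0)) => //.
- by move=> z; apply: cvgB; [exact: n_cont | exact: cvg_cst].
- by move=> s s0; apply: is_deriveB (n_derive_K s s0) _.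
- by rewrite subr_ge0.
move=> T _; exists 0 => s s0 _.
rewrite mul0r subr0 -[K - n s]opprB !mulrN mulrCA -negsqE oppr_le0.
by rewrite mulr_ge0 ?negsq_ge0 ?divr_ge0 ?S_ge0 ?ltW.
Qed.

Lemma le_logistic (c : R) (u : R -> R) :
  {within [set t : R | 0 <= t], continuous u} ->
  (forall t : R, 0 < t -> is_derive t 1 u (c * u t * (1 - u t / K))) ->
  n 0 <= u 0 ->
  (forall t : R, 0 < t -> (S t - c * n t) * (1 - n t / K) <= 0) ->
  forall t : R, 0 <= t -> n t <= u t.
Proof.
move=> cu du nu0 hS.
apply: (@logistic_comparison R K c n u (fun t => (S t - c * n t) * (1 - n t / K))
  (fun=> 0) n_cont cu) => // t t0.
- by apply: (is_derive_eq (n_derive t t0)); ring.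
- by rewrite addr0; exact: du.
Qed.

Lemma ge_logistic (c : R) (u : R -> R) :
  {within [set t : R | 0 <= t], continuous u} ->
  (forall t : R, 0 < t -> is_derive t 1 u (c * u t * (1 - u t / K))) ->
  u 0 <= n 0 ->
  (forall t : R, 0 < t -> 0 <= (S t - c * n t) * (1 - n t / K)) ->
  forall t : R, 0 <= t -> u t <= n t.
Proof.
move=> cu du un0 hS.
apply: (@logistic_comparison R K c u n (fun=> 0)
  (fun t => (S t - c * n t) * (1 - n t / K)) cu n_cont) => // t t0.
- by rewrite addr0; exact: du.
- by apply: (is_derive_eq (n_derive t t0)); ring.
Qed.

Lemma logistic_expconv_le_K : 0 < n 0 -> n 0 <= K ->
  forall t : R, 0 <= t -> K - n t <= (K - n 0) * expR (- (a * n 0 / K) * t).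
Proof.
move=> n0_gt0 nK t t0; have n_le_K := logistic_le_K nK.
have n_ge_n0 s : 0 <= s -> n 0 <= n s.
  move=> s0; rewrite -lerN2.
  apply: (@ler0_derive_le_init R (fun s => - n s) (fun s => - (S s / K * (K - n s))) s s0).
  - by move=> z; apply: cvgN; exact: n_cont.
  - by move=> x x0 _; apply/is_deriveN/n_derive_K.
  - move=> x x0 _.
    by rewrite oppr_le0 mulr_ge0 ?divr_ge0 ?subr_ge0 ?S_ge0 ?n_le_K ?ltW.
apply: (@gronwall R (fun s => K - n s) (fun s => 0 - S s / K * (K - n s))) => //.
- by move=> z; apply: cvgB; [exact: cvg_cst | exact: n_cont].
- by move=> s s0 _; have := n_derive_K s s0; exact: is_deriveB.
move=> s s0 _; rewrite sub0r -mulNr; apply: ler_wpM2r.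
  by rewrite subr_ge0 n_le_K ?ltW.
rewrite lerN2 ler_pM2r ?invr_gt0 //; apply: (le_trans _ (S_ge s (ltW s0))).
by rewrite ler_wpM2l ?n_ge_n0 ?ltW.
Qed.

Lemma logistic_expconv_ge_K : K <= n 0 ->
  forall t : R, 0 <= t -> n t - K <= (n 0 - K) * expR (- a * t).
Proof.
move=> Kn t t0; have K_le_n := logistic_ge_K Kn.
apply: (@gronwall R (fun s => n s - K) (fun s => S s / K * (K - n s) - 0)) => //.
- by move=> z; apply: cvgB; [exact: n_cont | exact: cvg_cst].
- by move=> s s0 _; apply: is_deriveB (n_derive_K s s0) _.
move=> s s0 _; rewrite subr0 -[K - n s]opprB mulrN -mulNr; apply: ler_wpM2r.
  by rewrite subr_ge0 K_le_n ?ltW.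
rewrite lerN2 ler_pdivlMr //.
by apply: (le_trans _ (S_ge s (ltW s0))); rewrite ler_wpM2l ?K_le_n ?ltW.
Qed.

Theorem logistic_sandwich (u w : R -> R) :
  0 < n 0 ->
  {within [set t : R | 0 <= t], continuous u} ->
  (forall t : R, 0 < t -> is_derive t 1 u (a * u t * (1 - u t / K))) ->
  u 0 = n 0 ->
  {within [set t : R | 0 <= t], continuous w} ->
  (forall t : R, 0 < t -> is_derive t 1 w (b * w t * (1 - w t / K))) ->
  w 0 = n 0 ->
  (exists (C lam : R), 0 < lam /\
     forall t : R, 0 <= t -> `|n t - K| <= C * expR (- lam * t)) /\
  (forall t : R, 0 <= t -> Num.min (u t) (w t) <= n t <= Num.max (u t) (w t)).
Proof.
move=> n0_gt0 cu du u0 cw dw w0.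
have Sa_ge0 t : 0 < t -> 0 <= S t - a * n t by move=> t0; rewrite subr_ge0 S_ge ?ltW.
have Sb_le0 t : 0 < t -> S t - b * n t <= 0 by move=> t0; rewrite subr_le0 S_le ?ltW.
have [nK|/ltW Kn] := leP (n 0) K.
- have n_le_K := logistic_le_K nK.
  have K_ge t : 0 < t -> 0 <= 1 - n t / K.
    by move=> t0; rewrite subr_ge0 ler_pdivrMr // mul1r n_le_K ?ltW.
  split.
    exists `|n 0 - K|, (a * n 0 / K); split; first by rewrite !mulr_gt0 ?invr_gt0.
    move=> t t0; rewrite distrC ger0_norm ?subr_ge0 ?n_le_K //.
    by rewrite distrC ger0_norm ?subr_ge0 ?logistic_expconv_le_K.
  move=> t t0; rewrite ge_min le_max (ge_logistic _ _ cu du) ?u0 //.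
    by rewrite (le_logistic _ _ cw dw) ?w0 ?orbT // => s s0; rewrite mulr_le0_ge0 ?Sb_le0 ?K_ge.
  by move=> s s0; rewrite mulr_ge0 ?Sa_ge0 ?K_ge.
- have K_le_n := logistic_ge_K Kn.
  have K_le t : 0 < t -> 1 - n t / K <= 0.
    by move=> t0; rewrite subr_le0 ler_pdivlMr // mul1r K_le_n ?ltW.
  split.
    exists `|n 0 - K|, a; split => // t t0.
    rewrite ger0_norm ?subr_ge0 ?K_le_n //.
    by rewrite ger0_norm ?subr_ge0 ?logistic_expconv_ge_K.
  move=> t t0; rewrite ge_min le_max (ge_logistic _ _ cw dw) ?w0 ?orbT //.
    by rewrite (le_logistic _ _ cu du) ?u0 // => s s0; rewrite mulr_ge0_le0 ?Sa_ge0 ?K_le.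
  by move=> s s0; rewrite mulr_le0 ?Sb_le0 ?K_le.
Qed.

End LogisticSandwich.

Lemma sum_migration_eq0 (R : pzRingType) n (mu : 'I_n -> 'I_n -> R) (x : 'I_n -> R) :
  (forall i j, mu i j = mu j i) ->
  \sum_(i < n) \sum_(j < n) mu i j * (x j - x i) = 0.
Proof.
move=> mu_sym; under eq_bigr do under eq_bigr do rewrite mulrBr.
under eq_bigr do rewrite sumrB; rewrite sumrB exchange_big /=.
by under eq_bigr do under eq_bigr do rewrite mu_sym; rewrite subrr.
Qed.

Section Migration.
Context {R : realType} {N : nat}.
Variables (K : R) (r : 'I_N -> R) (mu : 'I_N -> 'I_N -> R) (v : 'I_N -> R -> R).
Hypothesis K_gt0 : 0 < K.
Hypotheses (mu_ge0 : forall i j, 0 <= mu i j) (mu_sym : forall i j, mu i j = mu j i).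
Hypothesis v_cont : forall i, {within [set t : R | 0 <= t], continuous (v i)}.
Hypothesis v_derive : forall i (t : R), 0 < t ->
  is_derive t 1 (v i)
    (v i t * (r i - K^-1 * \sum_(j < N) r j * v j t)
     + \sum_(j < N) mu i j * (v j t - v i t)).
Hypothesis v0_ge0 : forall i, 0 <= v i 0.

Lemma population_nonneg i (t : R) : 0 <= t -> 0 <= v i t.
Proof.
move: i t; apply: (@nonneg_invariant R N v (fun i t =>
  v i t * (r i - K^-1 * \sum_(j < N) r j * v j t)
  + \sum_(j < N) mu i j * (v j t - v i t)) v_cont v_derive v0_ge0) => T T0.
have growth_cont : {within [set t : R | 0 <= t],
    continuous (fun t => - \sum_(j < N) r j * v j t)}.
  move=> z; apply: cvgN; move: z; apply: within_continuous_sum => j z.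
  by apply: cvgM; [exact: cvg_cst | exact: v_cont].
have [B leB] := bounded_above_on_itv growth_cont T0.
exists (xi_plus r + K^-1 * B + \sum_(i < N) \sum_(j < N) mu i j) => s s0 sT.
set A := xi_plus r + K^-1 * B; set E := \sum_(i < N) negsq (v i s).
have negsq_le_E j : negsq (v j s) <= E.
  by rewrite /E (bigD1 j) //= lerDl sumr_ge0 // => k _; exact: negsq_ge0.
have rate_le i : r i - K^-1 * \sum_(j < N) r j * v j s <= A.
  by rewrite lerD ?xi_plus_ge // -mulrN ler_wpM2l ?invr_ge0 ?leB ?ltW.
have -> : (A + \sum_(i < N) \sum_(j < N) mu i j) * E
    = \sum_(i < N) (A * negsq (v i s) + \sum_(j < N) mu i j * E).
  rewrite big_split /= -mulr_sumr mulrDl mulr_suml.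
  by congr (_ + _); apply: eq_bigr => i _; rewrite mulr_suml.
apply: ler_sum => i _; rewrite mulrDr mulrA -negsqE; apply: lerD.
  by rewrite [A * _]mulrC ler_wpM2l ?negsq_ge0 ?rate_le.
rewrite mulr_sumr; apply: ler_sum => j _; rewrite mulrCA ler_wpM2l //.
exact: le_trans (min0_mul_subr_le _ _) (negsq_le_E j).
Qed.

Lemma total_pop_cont : {within [set t : R | 0 <= t], continuous (total_pop v)}.
Proof. exact: within_continuous_sum v_cont. Qed.

Lemma total_pop_ge0 (t : R) : 0 <= t -> 0 <= total_pop v t.
Proof. by move=> t0; rewrite sumr_ge0 // => i _; exact: population_nonneg. Qed.

Lemma is_derive_total_pop (t : R) : 0 < t ->
  is_derive t 1 (total_pop v)
    ((\sum_(j < N) r j * v j t) * (1 - total_pop v t / K)).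
Proof.
move=> t0; have := is_derive_sum (fun i => v_derive i t t0).
rewrite (_ : \sum_(i < N) v i = total_pop v); last first.
  by apply/funext => s; rewrite /total_pop fct_sumE.
move=> H; apply: (is_derive_eq H); rewrite big_split /= sum_migration_eq0 // addr0.
under eq_bigr do rewrite mulrBr [v _ t * r _]mulrC.
by rewrite sumrB -mulr_suml /total_pop; field; rewrite gt_eqF.
Qed.

Lemma total_growth_ge (t : R) : 0 <= t ->
  xi_minus r * total_pop v t <= \sum_(j < N) r j * v j t.
Proof.
move=> t0; rewrite mulr_sumr ler_sum // => j _.
by rewrite ler_wpM2r ?population_nonneg ?xi_minus_le.
Qed.

Lemma total_growth_le (t : R) : 0 <= t ->
  \sum_(j < N) r j * v j t <= xi_plus r * total_pop v t.
Proof.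
move=> t0; rewrite mulr_sumr ler_sum // => j _.
by rewrite ler_wpM2r ?population_nonneg ?xi_plus_ge.
Qed.

End Migration.

Theorem lemma5p2 (R : realType) (N : nat) (K : R) (r : 'I_N -> R)
  (mu : 'I_N -> 'I_N -> R) (v : 'I_N -> R -> R) (umin umax : R -> R) :
  (0 < N)%N -> 0 < K -> (forall i, 0 < r i) ->
  (forall i j, 0 <= mu i j) -> (forall i j, mu i j = mu j i) ->
  irreducible_mx mu ->
  (* v solves the system on [0, +oo) *)
  (forall i, {within [set t : R | 0 <= t], continuous (v i)}) ->
  (forall i (t : R), 0 < t ->
     is_derive t 1 (v i)
       (v i t * (r i - K^-1 * \sum_(j < N) r j * v j t)
        + \sum_(j < N) mu i j * (v j t - v i t))) ->
  (forall i, 0 <= v i 0) -> (exists i, v i 0 != 0) ->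
  (* umin solves the logistic equation with rate xi^- and u(0) = N(0) *)
  {within [set t : R | 0 <= t], continuous umin} ->
  (forall t : R, 0 < t ->
     is_derive t 1 umin (xi_minus r * umin t * (1 - umin t / K))) ->
  umin 0 = total_pop v 0 ->
  (* umax solves the logistic equation with rate xi^+ and u(0) = N(0) *)
  {within [set t : R | 0 <= t], continuous umax} ->
  (forall t : R, 0 < t ->
     is_derive t 1 umax (xi_plus r * umax t * (1 - umax t / K))) ->
  umax 0 = total_pop v 0 ->
  (exists (C lam : R), 0 < lam /\
     forall t : R, 0 <= t -> `|total_pop v t - K| <= C * expR (- lam * t)) /\
  (forall t : R, 0 <= t ->
     Num.min (umin t) (umax t) <= total_pop v t <= Num.max (umin t) (umax t)).
Proof.
move=> N_gt0 K_gt0 r_gt0 mu_ge0 mu_sym _ v_cont v_derive v0_ge0 [k vk0].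
have pop0_gt0 : 0 < total_pop v 0.
  rewrite /total_pop (bigD1 k) //= ltr_wpDr ?sumr_ge0 //.
  by rewrite lt_def vk0 v0_ge0.
apply: (@logistic_sandwich R K _ _ (total_pop v) (fun t => \sum_(j < N) r j * v j t))
  => //.
- exact: xi_minus_gt0.
- exact: total_pop_cont.
- exact: is_derive_total_pop.
- exact: total_pop_ge0.
- exact: total_growth_ge.
- exact: total_growth_le.
Qed.
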